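(* Let $n\ge 4$ and write $n=2m+1$ or $n=2m$ with $m\in\{2,3,\dots\}$. Let $p>1$, let $F\in C^1(\mathbb{R})$ satisfy $F(s)\ge A s^p$ for all $s\ge0$ for some constant $A>0$, and let $0<\kappa<\kappa_0:=\frac{2}{p-1}$. Let $f\in C^2(0,\infty)$, $g\in C^1(0,\infty)$ and suppose there is a constant $R>0$ such that: (odd case $n=2m+1$) either there is $C_1>0$ with $$f(r)\ge \frac{C_1}{(1+r)^\kappa},\quad g(r)>0,\quad -C_{1,m}\frac{f(r)}{r}+g(r)>0\quad\text{for } r\ge R,$$ or there is $C_2>0$ with $$f(r)>0,\quad g(r)>0,\quad -C_{1,m}\frac{f(r)}{r}+g(r)\ge \frac{C_2}{(1+r)^{1+\kappa}}\quad\text{for } r\ge R;$$ (even case $n=2m$) there is $C_3>0$ with $$f(r)>0,\quad g(r)>0,\quad -C_{2,m}\frac{f(r)}{r}-|f'(r)|+\frac12 g(r)\ge \frac{C_3}{(1+r)^{1+\kappa}}\quad\text{for } r\ge R.$$ Let $u=u(r,t)$ be a solution of the radially symmetric Cauchy problem $$u_{tt}-\frac{n-1}{r}u_r-u_{rr}=F(u)\ \text{ in }(0,\infty)\times[0,\infty),\qquad u(r,0)=f(r),\ u_t(r,0)=g(r)\ \text{ in }(0,\infty).$$ Then $u$ cannot exist globally in time.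
   Context: $C_{1,m}=m(m-1)$ and $C_{2,m}=m-\frac38+\frac{5\zeta_m(m-1)^2}{3}$, where $\zeta_m\in(0,1]$ is a fixed constant depending only on $m$ such that the Chebyshev polynomial $T_{m-1}$ satisfies $\frac12\le T_{m-1}(z)\le 1$ and $0<T_{m-1}'(z)\le (m-1)^2$ for all $\frac{1}{1+\zeta_m}\le z\le 1$ (one may take $\zeta_2=1$). Here $T_k(z)=\frac{(-1)^k}{(2k-1)!!}(1-z^2)^{1/2}\frac{d^k}{dz^k}(1-z^2)^{k-1/2}$. ''Cannot exist globally in time'' means there is no (classical) solution defined for all $t\in[0,\infty)$. *)

From Stdlib Require Import Reals Lra.
From Coquelicot Require Import Coquelicot.
Open Scope R_scope.

(* Chebyshev polynomials of the first kind, T_0 = 1, T_1 = z,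
   T_(k+2) = 2 z T_(k+1) - T_k  (equal to the Rodrigues formula in the paper). *)
Fixpoint cheb (k : nat) (z : R) : R :=
  match k with
  | O => 1
  | S k' => match k' with
            | O => z
            | S k'' => 2 * z * cheb k' z - cheb k'' z
            end
  end.

Definition rpow (s p : R) : R := if Rle_dec s 0 then 0 else Rpower s p.

Definition zeta_admissible (m : nat) (zeta : R) : Prop :=
  0 < zeta <= 1 /\
  forall z, 1 / (1 + zeta) <= z <= 1 ->
    1/2 <= cheb (m - 1) z <= 1 /\
    0 < Derive (cheb (m - 1)) z <= (INR m - 1) ^ 2.

Definition C1m (m : nat) : R := INR m * (INR m - 1).
Definition C2m (m : nat) (zeta : R) : R :=
  INR m - 3 / 8 + 5 * zeta * (INR m - 1) ^ 2 / 3.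

Definition C1_R (F : R -> R) : Prop :=
  forall s, ex_derive F s /\ continuous (Derive F) s.

Definition C2_pos (f : R -> R) : Prop :=
  forall r, 0 < r ->
    ex_derive f r /\ ex_derive (Derive f) r /\ continuous (Derive_n f 2) r.
Definition C1_pos (g : R -> R) : Prop :=
  forall r, 0 < r -> ex_derive g r /\ continuous (Derive g) r.

Definition jcont (v : R -> R -> R) (r t : R) : Prop :=
  continuous (fun q : R * R => v (fst q) (snd q)) (r, t).

(* Global classical solution of the radial problem with data (f,g):
   u is C^2 on (0,oo) x [0,oo) (encoded as the restriction of a C^2 function
   on (0,oo) x R), ur, ut, urr, urt, utt are its partials,
   the equation holds for all r > 0, t >= 0, and u(r,0)=f(r), u_t(r,0)=g(r). *)
Definition global_solution (n : nat) (F f g : R -> R) (u : R -> R -> R) : Prop :=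
  exists ur ut urr urt utt : R -> R -> R,
    (forall r t, 0 < r ->
       is_derive (fun x => u x t) r (ur r t) /\
       is_derive (fun s => u r s) t (ut r t) /\
       is_derive (fun x => ur x t) r (urr r t) /\
       is_derive (fun s => ur r s) t (urt r t) /\
       is_derive (fun s => ut r s) t (utt r t) /\
       jcont u r t /\ jcont ur r t /\ jcont ut r t /\
       jcont urr r t /\ jcont urt r t /\ jcont utt r t) /\
    (forall r t, 0 < r -> 0 <= t ->
       utt r t - (INR n - 1) / r * ur r t - urr r t = F (u r t)) /\
    (forall r, 0 < r -> u r 0 = f r /\ ut r 0 = g r).

From Stdlib Require Import Reals Lra Lia Classical.
From Coquelicot Require Import Coquelicot.
Open Scope R_scope.

(** With [k = (n-1)/2], the weighted function [w = r^k u] solves the one-dimensional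
    equation [w_tt - w_rr = r^k F(u) - k(k-1) w / r^2]. On the slab [L/2 <= r <= 3L/2]
    the potential term is of order [L^-2], so for large [L] the Young inequality gives
    [w_tt - w_rr >= (B/2) w^p - delta] with constants depending only on [L]. Integrating
    over backward characteristic triangles (d'Alembert) with data [w > 0],
    [w_t >= eta ~ L^(k-1-kappa)], a continuity argument keeps [w] above a profile that
    grows linearly and then follows the explicit blow-up solution
    [a (t_b - t)^(-2/(p-1))] of [y'' = (B/2) y^p]. Because [kappa < 2/(p-1)], the blow-up
    time [t_b ~ L^theta] with [theta < 1] stays below [L/2] for large [L], so [w] would be
    unbounded near a finite time, contradicting its continuity. Only [f > 0] and
    [g >= C (1+r)^(-1-kappa)] are needed from the data hypotheses; [zeta] enters only
    through [C_{2,m} >= 0]. *)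

Definition radial_C2 (u ur ut urr urt utt : R -> R -> R) : Prop :=
  forall r t, 0 < r ->
    is_derive (fun x => u x t) r (ur r t) /\
    is_derive (fun s => u r s) t (ut r t) /\
    is_derive (fun x => ur x t) r (urr r t) /\
    is_derive (fun s => ur r s) t (urt r t) /\
    is_derive (fun s => ut r s) t (utt r t) /\
    jcont u r t /\ jcont ur r t /\ jcont ut r t /\
    jcont urr r t /\ jcont urt r t /\ jcont utt r t.

Lemma jcont_continuity_2d_pt v r t : jcont v r t -> continuity_2d_pt v r t.
Proof. intro H. apply continuity_2d_pt_filterlim. exact H. Qed.

Lemma jcont_slice_r v r t : jcont v r t -> continuous (fun x => v x t) r.
Proof.
  intro H. apply (continuous_comp_2 (fun x : R => x) (fun _ : R => t) v r); auto.
  - apply continuous_id.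
  - apply continuous_const.
Qed.

Lemma jcont_slice_t v r t : jcont v r t -> continuous (fun s => v r s) t.
Proof.
  intro H. apply (continuous_comp_2 (fun _ : R => r) (fun s : R => s) v t); auto.
  - apply continuous_const.
  - apply continuous_id.
Qed.

Lemma continuity_2d_pt_swap f x y :
  continuity_2d_pt f x y -> continuity_2d_pt (fun u v => f v u) y x.
Proof.
  intros H eps. destruct (H eps) as [d Hd]. exists d. intros u v H1 H2. apply Hd; assumption.
Qed.

Lemma jcont_const (c : R) x s : jcont (fun _ _ => c) x s.
Proof. apply continuous_const. Qed.

Lemma jcont_plus (v1 v2 : R -> R -> R) x s : jcont v1 x s -> jcont v2 x s ->
  jcont (fun x s => v1 x s + v2 x s) x s.
Proof.
  apply (continuous_plus (V := R_NormedModule) (fun q : R * R => v1 (fst q) (snd q))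
           (fun q : R * R => v2 (fst q) (snd q))).
Qed.

Lemma jcont_mult (v1 v2 : R -> R -> R) x s : jcont v1 x s -> jcont v2 x s ->
  jcont (fun x s => v1 x s * v2 x s) x s.
Proof.
  apply (continuous_mult (K := R_AbsRing) (fun q : R * R => v1 (fst q) (snd q))
           (fun q : R * R => v2 (fst q) (snd q))).
Qed.

Lemma Rpower_pos x y : 0 < Rpower x y.
Proof. apply exp_pos. Qed.

Lemma is_derive_eq (f : R -> R) (x l l' : R) : is_derive f x l -> l = l' -> is_derive f x l'.
Proof. intros H ->. exact H. Qed.

Lemma is_derive_Rpower e x : 0 < x -> is_derive (fun y => Rpower y e) x (e * Rpower x (e - 1)).
Proof. intro Hx. apply is_derive_Reals. apply derivable_pt_lim_power. exact Hx. Qed.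

Lemma is_derive_Rpower_sub tb e s : s < tb ->
  is_derive (fun z => Rpower (tb - z) e) s (- (e * Rpower (tb - s) (e - 1))).
Proof.
  intro H. eapply is_derive_eq.
  - apply (is_derive_comp (fun y => Rpower y e) (fun z => tb - z) s).
    + apply is_derive_Rpower. lra.
    + auto_derive; auto.
  - unfold scal; simpl; unfold mult; simpl. ring.
Qed.

Lemma jcont_Rpower e x s : 0 < x -> jcont (fun x _ => Rpower x e) x s.
Proof.
  intro Hx. apply (continuous_comp (fun q : R * R => fst q) (fun y => Rpower y e)).
  - apply continuous_fst.
  - apply (ex_derive_continuous (K := R_AbsRing) (V := R_NormedModule)).
    eexists. apply is_derive_Rpower. exact Hx.
Qed.

Lemma locally_fst_pos X s : 0 < X -> locally (X, s) (fun q : R * R => 0 < fst q).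
Proof.
  intro HX. apply (proj1 (locally_2d_locally (fun u _ => 0 < u) X s)).
  exists (mkposreal X HX). intros u v Hu _. simpl in Hu. apply Rabs_def2 in Hu. lra.
Qed.

Lemma is_derive_along_line (W Wr Wt : R -> R -> R) c al s :
  0 < c + al * s ->
  (forall x sg, 0 < x -> is_derive (fun z => W z sg) x (Wr x sg)) ->
  is_derive (fun z => W (c + al * s) z) s (Wt (c + al * s) s) ->
  jcont Wr (c + al * s) s ->
  is_derive (fun sg => W (c + al * sg) sg) s (al * Wr (c + al * s) s + Wt (c + al * s) s).
Proof.
  intros Hpos HWr HWt Hc.
  assert (Hdiff : differentiable_pt_lim W (c + al * s) s (Wr (c + al * s) s) (Wt (c + al * s) s)).
  { apply filterdiff_differentiable_pt_lim, is_derive_filterdiff; [| exact HWt | exact Hc].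
    generalize (locally_fst_pos _ s Hpos). apply filter_imp. intros q Hq. apply HWr, Hq. }
  assert (Hline : derivable_pt_lim (fun sg => c + al * sg) s al).
  { apply is_derive_Reals. auto_derive; auto; ring. }
  assert (Hid : derivable_pt_lim (fun sg : R => sg) s 1).
  { apply is_derive_Reals. auto_derive; auto. }
  apply is_derive_Reals.
  replace (al * Wr (c + al * s) s + Wt (c + al * s) s)
    with (Wr (c + al * s) s * al + Wt (c + al * s) s * 1) by ring.
  exact (derivable_pt_lim_comp_2d W _ _ s _ _ _ _ Hdiff Hline Hid).
Qed.

Lemma ex_RInt_slice (v : R -> R -> R) y a b : 0 < a -> 0 < b ->
  (forall x, 0 < x -> jcont v x y) -> ex_RInt (fun t => v t y) a b.
Proof.
  intros Ha Hb Hv. apply (@ex_RInt_continuous R_CompleteNormedModule). intros z [Hz _].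
  apply jcont_slice_r, Hv. eapply Rlt_le_trans; [| exact Hz]. apply Rmin_glb_lt; auto.
Qed.

Section DAlembert.
Variables W Wr Wt Wrr Wtt : R -> R -> R.
Hypothesis HWr : forall x sg, 0 < x -> is_derive (fun z => W z sg) x (Wr x sg).
Hypothesis HWt : forall x sg, 0 < x -> is_derive (fun z => W x z) sg (Wt x sg).
Hypothesis HWrr : forall x sg, 0 < x -> is_derive (fun z => Wr z sg) x (Wrr x sg).
Hypothesis HWtt : forall x sg, 0 < x -> is_derive (fun z => Wt x z) sg (Wtt x sg).
Hypothesis HC : forall x sg, 0 < x ->
  jcont Wr x sg /\ jcont Wt x sg /\ jcont Wrr x sg /\ jcont Wtt x sg.

(** d'Alembert's formula along the backward characteristic triangle with apex [(x0, t0)]. *)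
Definition char_integral x0 t0 sg :=
  RInt (fun x => Wt x sg) (x0 - t0 + sg) (x0 + t0 - sg)
  + W (x0 + t0 - sg) sg + W (x0 - t0 + sg) sg.

Lemma char_integral_apex x0 t0 : char_integral x0 t0 t0 = 2 * W x0 t0.
Proof.
  unfold char_integral. replace (x0 - t0 + t0) with x0 by ring.
  replace (x0 + t0 - t0) with x0 by ring. rewrite RInt_point. unfold zero; simpl. ring.
Qed.

Lemma continuity_2d_pt_Derive_Wt sg t : 0 < t ->
  continuity_2d_pt (fun u v => Derive (fun z => Wt v z) u) sg t.
Proof.
  intro Ht. apply continuity_2d_pt_ext_loc with (fun u v => Wtt v u).
  - exists (mkposreal (t / 2) ltac:(lra)). intros u v _ Hv. simpl in Hv.
    apply Rabs_def2 in Hv. symmetry. apply is_derive_unique, HWtt. lra.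
  - apply continuity_2d_pt_swap, jcont_continuity_2d_pt, HC, Ht.
Qed.

Lemma is_derive_RInt_Wt_triangle x0 t0 s0 : 0 < x0 - t0 + s0 -> 0 < x0 + t0 - s0 ->
  is_derive (fun sg => RInt (fun x => Wt x sg) (x0 - t0 + sg) (x0 + t0 - sg)) s0
    (RInt (fun x => Wtt x s0) (x0 - t0 + s0) (x0 + t0 - s0)
     - Wt (x0 - t0 + s0) s0 - Wt (x0 + t0 - s0) s0).
Proof.
  intros Ha Hb.
  set (a := fun sg => x0 - t0 + sg). set (b := fun sg => x0 + t0 - sg).
  assert (Hm : 0 < Rmin (a s0) (b s0)) by (apply Rmin_glb_lt; auto).
  assert (HWt_int : forall y a b, 0 < a -> 0 < b -> ex_RInt (fun t => Wt t y) a b).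
  { intros y a' b' Ha' Hb'. apply ex_RInt_slice; auto. intros x Hx. apply HC, Hx. }
  eapply is_derive_eq.
  - apply (is_derive_RInt_param_bound_comp (fun sg t => Wt t sg) a b s0 1 (-1)).
    + apply filter_forall. intro y. apply HWt_int; auto.
    + exists (mkposreal (a s0 / 2) ltac:(unfold a in *; lra)).
      apply filter_forall. intro y. simpl. apply HWt_int; unfold a in *; lra.
    + exists (mkposreal (b s0 / 2) ltac:(unfold b in *; lra)).
      apply filter_forall. intro y. simpl. apply HWt_int; unfold b in *; lra.
    + unfold a. auto_derive; auto; ring.
    + unfold b. auto_derive; auto; ring.
    + exists (mkposreal (Rmin (a s0) (b s0) / 2) ltac:(lra)).
      apply filter_forall. intros y t [Ht _]. simpl in Ht.
      eexists. apply HWtt. eapply Rlt_le_trans; [| exact Ht].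
      apply Rmin_glb_lt.
      * assert (Rmin (a s0) (b s0) <= a s0) by apply Rmin_l. lra.
      * assert (Rmin (a s0) (b s0) <= b s0) by apply Rmin_r. lra.
    + intros t [Ht _]. apply continuity_2d_pt_Derive_Wt. lra.
    + exists (mkposreal (a s0 / 2) ltac:(unfold a in *; lra)).
      intros u v _ Hv. simpl in Hv. apply Rabs_def2 in Hv.
      apply continuity_2d_pt_Derive_Wt. unfold a in *; lra.
    + exists (mkposreal (b s0 / 2) ltac:(unfold b in *; lra)).
      intros u v _ Hv. simpl in Hv. apply Rabs_def2 in Hv.
      apply continuity_2d_pt_Derive_Wt. unfold b in *; lra.
    + apply continuity_pt_filterlim, jcont_slice_r, HC. auto.
    + apply continuity_pt_filterlim, jcont_slice_r, HC. auto.
  - simpl. fold (a s0) (b s0).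
    rewrite (RInt_ext (fun t => Derive (fun u => Wt t u) s0) (fun x => Wtt x s0)).
    + unfold plus, mult; simpl. unfold a, b. ring.
    + intros x [Hx _]. apply is_derive_unique, HWtt.
      eapply Rlt_trans; [| exact Hx]. apply Rmin_glb_lt; auto.
Qed.

Lemma RInt_Wrr a b s0 : 0 < a -> 0 < b ->
  RInt (fun x => Wrr x s0) a b = Wr b s0 - Wr a s0.
Proof.
  intros Ha Hb.
  assert (Hm : 0 < Rmin a b) by (apply Rmin_glb_lt; auto).
  apply is_RInt_unique.
  apply (@is_RInt_derive R_CompleteNormedModule (fun x => Wr x s0) (fun x => Wrr x s0)).
  - intros x Hx. apply HWrr. lra.
  - intros x Hx. apply jcont_slice_r, HC. lra.
Qed.

Lemma is_derive_char_integral x0 t0 s0 : 0 < x0 - t0 + s0 -> 0 < x0 + t0 - s0 ->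
  is_derive (char_integral x0 t0) s0
    (RInt (fun x => Wtt x s0 - Wrr x s0) (x0 - t0 + s0) (x0 + t0 - s0)).
Proof.
  intros Ha Hb.
  assert (Hright : is_derive (fun sg => W (x0 + t0 - sg) sg) s0
                     (-1 * Wr (x0 + t0 + -1 * s0) s0 + Wt (x0 + t0 + -1 * s0) s0)).
  { apply is_derive_ext with (fun sg => W (x0 + t0 + -1 * sg) sg).
    - intro t. f_equal. ring.
    - apply is_derive_along_line; [lra | exact HWr | apply HWt; lra | apply HC; lra]. }
  assert (Hleft : is_derive (fun sg => W (x0 - t0 + sg) sg) s0
                    (1 * Wr (x0 - t0 + 1 * s0) s0 + Wt (x0 - t0 + 1 * s0) s0)).
  { apply is_derive_ext with (fun sg => W (x0 - t0 + 1 * sg) sg).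
    - intro t. f_equal. ring.
    - apply is_derive_along_line; [lra | exact HWr | apply HWt; lra | apply HC; lra]. }
  eapply is_derive_eq.
  - exact (is_derive_plus _ _ s0 _ _
             (is_derive_plus _ _ s0 _ _ (is_derive_RInt_Wt_triangle x0 t0 s0 Ha Hb) Hright)
             Hleft).
  - replace (x0 + t0 + -1 * s0) with (x0 + t0 - s0) by ring.
    replace (x0 - t0 + 1 * s0) with (x0 - t0 + s0) by ring.
    rewrite (RInt_minus (V := R_CompleteNormedModule) (fun x => Wtt x s0) (fun x => Wrr x s0)).
    + rewrite RInt_Wrr by lra. unfold minus, plus, opp; simpl. ring.
    + apply ex_RInt_slice; try lra. intros x Hx. apply HC, Hx.
    + apply ex_RInt_slice; try lra. intros x Hx. apply HC, Hx.
Qed.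

(** [2 (t0 - sg)] is the length of the slice at height [sg]. *)
Lemma char_integral_increment_ge x0 t0 s1 s2 (lam G G' : R -> R) :
  0 <= s1 <= s2 -> s2 <= t0 -> 0 < x0 - t0 ->
  (forall sg, s1 <= sg <= s2 -> is_derive G sg (G' sg)) ->
  (forall sg, s1 < sg < s2 -> G' sg <= 2 * (t0 - sg) * lam sg) ->
  (forall sg x, s1 < sg < s2 -> x0 - t0 + sg <= x <= x0 + t0 - sg ->
     lam sg <= Wtt x sg - Wrr x sg) ->
  char_integral x0 t0 s2 - char_integral x0 t0 s1 >= G s2 - G s1.
Proof.
  intros Hs Hs2 Hx HG HG' Hlam.
  destruct (Req_dec s1 s2) as [<- | Hne]; [lra |].
  destruct (MVT_cor2 (fun sg => char_integral x0 t0 sg - G sg)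
     (fun sg => RInt (fun x => Wtt x sg - Wrr x sg) (x0 - t0 + sg) (x0 + t0 - sg) - G' sg)
     s1 s2) as [c [Hmvt Hc]].
  - lra.
  - intros c Hc. apply is_derive_Reals, (is_derive_minus (char_integral x0 t0) G c).
    + apply is_derive_char_integral; lra.
    + apply HG. lra.
  - assert (Hslice : RInt (fun _ => lam c) (x0 - t0 + c) (x0 + t0 - c) <=
                     RInt (fun x => Wtt x c - Wrr x c) (x0 - t0 + c) (x0 + t0 - c)).
    { apply RInt_le.
      - lra.
      - apply ex_RInt_const.
      - apply (ex_RInt_minus (V := R_CompleteNormedModule));
          apply ex_RInt_slice; try lra; intros x Hx'; apply HC, Hx'.
      - intros x Hx'. apply Hlam; lra. }
    rewrite RInt_const in Hslice. unfold scal in Hslice; simpl in Hslice.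
    unfold mult in Hslice; simpl in Hslice.
    assert (HG'c := HG' c Hc).
    assert (0 <= RInt (fun x => Wtt x c - Wrr x c) (x0 - t0 + c) (x0 + t0 - c) - G' c)
      by nra.
    assert (0 <= (s2 - s1) * (RInt (fun x => Wtt x c - Wrr x c) (x0 - t0 + c) (x0 + t0 - c)
                              - G' c)) by (apply Rmult_le_pos; lra).
    lra.
Qed.

End DAlembert.

Section Weighted.
Variables (u ur ut urr urt utt : R -> R -> R) (k : R).

Definition wk x s := Rpower x k * u x s.
Definition wk_r x s := k * Rpower x (k - 1) * u x s + Rpower x k * ur x s.
Definition wk_t x s := Rpower x k * ut x s.
Definition wk_rr x s :=
  k * (k - 1) * Rpower x (k - 2) * u x s + 2 * k * Rpower x (k - 1) * ur x s
  + Rpower x k * urr x s.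
Definition wk_tt x s := Rpower x k * utt x s.

Lemma wk_wave_identity x s : 0 < x ->
  wk_tt x s - wk_rr x s =
  Rpower x k * (utt x s - 2 * k / x * ur x s - urr x s) - k * (k - 1) * wk x s / (x * x).
Proof.
  intro Hx. unfold wk, wk_tt, wk_rr.
  assert (H1 : Rpower x (k - 1) = Rpower x k / x).
  { replace (k - 1) with (k + - (1)) by ring.
    rewrite Rpower_plus, Rpower_Ropp, Rpower_1 by exact Hx. reflexivity. }
  assert (H2 : Rpower x (k - 2) = Rpower x k / (x * x)).
  { replace (k - 2) with ((k - 1) + - (1)) by ring.
    rewrite Rpower_plus, Rpower_Ropp, Rpower_1, H1 by exact Hx. field. lra. }
  rewrite H1, H2. field. lra.
Qed.

Hypothesis Hsol : radial_C2 u ur ut urr urt utt.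

Lemma is_derive_wk_r x sg : 0 < x -> is_derive (fun z => wk z sg) x (wk_r x sg).
Proof.
  intro Hx. destruct (Hsol x sg Hx) as [Hur _].
  apply (Derive.is_derive_mult (fun z => Rpower z k) (fun z => u z sg));
    [apply is_derive_Rpower, Hx | exact Hur].
Qed.

Lemma is_derive_wk_t x sg : 0 < x -> is_derive (fun z => wk x z) sg (wk_t x sg).
Proof. intro Hx. apply is_derive_scal, (proj1 (proj2 (Hsol x sg Hx))). Qed.

Lemma is_derive_wk_tt x sg : 0 < x -> is_derive (fun z => wk_t x z) sg (wk_tt x sg).
Proof.
  intro Hx. destruct (Hsol x sg Hx) as [_ [_ [_ [_ [Hutt _]]]]]. apply is_derive_scal, Hutt.
Qed.

Lemma is_derive_wk_rr x sg : 0 < x -> is_derive (fun z => wk_r z sg) x (wk_rr x sg).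
Proof.
  intro Hx. destruct (Hsol x sg Hx) as [Hur [_ [Hurr _]]]. unfold wk_r, wk_rr.
  eapply is_derive_eq.
  - apply (is_derive_plus (fun z => k * Rpower z (k - 1) * u z sg)
                          (fun z => Rpower z k * ur z sg)).
    + apply (Derive.is_derive_mult (fun z => k * Rpower z (k - 1)) (fun z => u z sg));
        [apply is_derive_scal, is_derive_Rpower, Hx | exact Hur].
    + apply (Derive.is_derive_mult (fun z => Rpower z k) (fun z => ur z sg));
        [apply is_derive_Rpower, Hx | exact Hurr].
  - unfold plus; simpl. replace (k - 1 - 1) with (k - 2) by ring. ring.
Qed.

Lemma jcont_wk x sg : 0 < x -> jcont wk x sg.
Proof.
  intro Hx. apply (jcont_mult (fun x _ => Rpower x k) u).
  - apply jcont_Rpower, Hx.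
  - exact (proj1 (proj2 (proj2 (proj2 (proj2 (proj2 (Hsol x sg Hx))))))).
Qed.

Lemma jcont_wk_derivatives x sg : 0 < x ->
  jcont wk_r x sg /\ jcont wk_t x sg /\ jcont wk_rr x sg /\ jcont wk_tt x sg.
Proof.
  intro Hx.
  destruct (Hsol x sg Hx) as [_ [_ [_ [_ [_ [Hu [Hur [Hut [Hurr [_ Hutt]]]]]]]]]].
  assert (Hpow : forall e c, jcont (fun x _ => c * Rpower x e) x sg).
  { intros e c. apply (jcont_mult (fun _ _ => c) (fun x _ => Rpower x e)).
    - apply jcont_const.
    - apply jcont_Rpower, Hx. }
  assert (Hk : forall v, jcont v x sg -> jcont (fun x s => Rpower x k * v x s) x sg).
  { intros v Hv. apply (jcont_mult (fun x _ => Rpower x k) v); [apply jcont_Rpower, Hx | exact Hv]. }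
  unfold wk_r, wk_t, wk_rr, wk_tt. repeat split; try (apply Hk; assumption).
  - apply (jcont_plus (fun x s => k * Rpower x (k - 1) * u x s)); [| apply Hk, Hur].
    apply (jcont_mult (fun x _ => k * Rpower x (k - 1)) u); auto.
  - apply (jcont_plus (fun x s => k * (k - 1) * Rpower x (k - 2) * u x s
                                  + 2 * k * Rpower x (k - 1) * ur x s)); [| apply Hk, Hurr].
    apply (jcont_plus (fun x s => k * (k - 1) * Rpower x (k - 2) * u x s)).
    + apply (jcont_mult (fun x _ => k * (k - 1) * Rpower x (k - 2)) u); auto.
    + apply (jcont_mult (fun x _ => 2 * k * Rpower x (k - 1)) ur); auto.
Qed.

End Weighted.

Lemma Rpower_Ropp_le a b e : 0 < a <= b -> 0 <= e -> Rpower b (- e) <= Rpower a (- e).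
Proof.
  intros Hab He. rewrite !Rpower_Ropp.
  apply Rinv_le_contravar; [apply Rpower_pos | apply Rle_Rpower_l; auto].
Qed.

Lemma rpow_ge0 s p : 0 <= rpow s p.
Proof. unfold rpow. destruct (Rle_dec s 0); [lra | left; apply Rpower_pos]. Qed.

Lemma rpow_Rpower s p : 0 < s -> rpow s p = Rpower s p.
Proof. intro H. unfold rpow. destruct (Rle_dec s 0); [lra | reflexivity]. Qed.

Lemma rpow_le a b p : 0 <= p -> 0 <= a <= b -> rpow a p <= rpow b p.
Proof.
  intros Hp Hab. unfold rpow.
  destruct (Rle_dec a 0), (Rle_dec b 0); try lra.
  - left. apply Rpower_pos.
  - apply Rle_Rpower_l; lra.
Qed.

Lemma rpow_mult_Rpower x k u p : 0 < x -> 0 <= Rpower x k * u ->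
  Rpower x k * rpow u p = Rpower x (k * (1 - p)) * rpow (Rpower x k * u) p.
Proof.
  intros Hx Hw. assert (Hxk : 0 < Rpower x k) by apply Rpower_pos.
  destruct (Rle_dec u 0) as [Hu | Hu].
  - replace u with 0 by nra. rewrite Rmult_0_r.
    unfold rpow. destruct (Rle_dec 0 0); [ring | lra].
  - rewrite !rpow_Rpower by (try apply Rmult_lt_0_compat; lra).
    rewrite <- Rpower_mult_distr, Rpower_mult, <- Rmult_assoc, <- Rpower_plus by lra.
    f_equal. f_equal. ring.
Qed.

Lemma young_absorb B mu p w : 0 < B -> 0 < mu -> 1 < p -> 0 <= w ->
  B / 2 * rpow w p - mu * Rpower (2 * mu / B) (/ (p - 1)) <= B * rpow w p - mu * w.
Proof.
  intros HB Hmu Hp Hw.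
  (* [w0] is where [mu w0 = B/2 w0^p]. *)
  set (w0 := Rpower (2 * mu / B) (/ (p - 1))).
  assert (Hw0 : 0 < w0) by apply Rpower_pos.
  assert (Hr := rpow_ge0 w p).
  destruct (Rle_dec w w0) as [Hle | Hgt].
  - assert (mu * w <= mu * w0) by (apply Rmult_le_compat_l; lra). nra.
  - assert (Hwp : 0 < w) by lra.
    rewrite rpow_Rpower in * by exact Hwp.
    assert (Hsplit : Rpower w p = Rpower w (p - 1) * w).
    { replace p with ((p - 1) + 1) at 1 by ring. rewrite Rpower_plus, Rpower_1 by exact Hwp. ring. }
    assert (Hw0p : Rpower w0 (p - 1) = 2 * mu / B).
    { unfold w0. rewrite Rpower_mult. replace (/ (p - 1) * (p - 1)) with 1 by (field; lra).
      apply Rpower_1. apply Rdiv_lt_0_compat; lra. }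
    assert (Hmono : Rpower w0 (p - 1) <= Rpower w (p - 1)) by (apply Rle_Rpower_l; lra).
    rewrite Hw0p in Hmono.
    assert (mu * w <= B / 2 * Rpower w (p - 1) * w).
    { replace (mu * w) with (B / 2 * (2 * mu / B) * w) by (field; lra).
      apply Rmult_le_compat_r; [lra |]. apply Rmult_le_compat_l; lra. }
    assert (0 <= mu * w0) by (apply Rmult_le_pos; lra).
    rewrite Hsplit. nra.
Qed.

(** The blow-up solution [a (tb - s)^(-beta)] of [y'' = K y^(1 + 2/beta)], with its first two
    derivatives [yB1] and [yB2]. *)
Definition yB a beta tb s := a * Rpower (tb - s) (- beta).
Definition yB1 a beta tb s := a * beta * Rpower (tb - s) (- beta - 1).
Definition yB2 a beta tb s := a * beta * (beta + 1) * Rpower (tb - s) (- beta - 2).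

Lemma yB_pos a beta tb s : 0 < a -> 0 < yB a beta tb s.
Proof. intro Ha. apply Rmult_lt_0_compat; [exact Ha | apply Rpower_pos]. Qed.

Lemma is_derive_yB a beta tb s : s < tb -> is_derive (yB a beta tb) s (yB1 a beta tb s).
Proof.
  intro H. unfold yB, yB1. eapply is_derive_eq.
  - apply is_derive_scal, is_derive_Rpower_sub, H.
  - ring.
Qed.

Lemma is_derive_yB1 a beta tb s : s < tb -> is_derive (yB1 a beta tb) s (yB2 a beta tb s).
Proof.
  intro H. unfold yB1, yB2. eapply is_derive_eq.
  - apply is_derive_scal, is_derive_Rpower_sub, H.
  - replace (- beta - 1 - 1) with (- beta - 2) by ring. ring.
Qed.

Lemma continuous_yB a beta tb s : s < tb -> continuous (yB a beta tb) s.
Proof.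
  intro H. apply (ex_derive_continuous (K := R_AbsRing) (V := R_NormedModule)).
  eexists. apply is_derive_yB, H.
Qed.

Lemma yB_glue eta beta tc : 0 < beta -> 0 < tc ->
  let a := eta * tc / 2 * Rpower (beta * tc) beta in
  yB a beta ((1 + beta) * tc) tc = eta * tc / 2 /\
  yB1 a beta ((1 + beta) * tc) tc = eta / 2.
Proof.
  intros Hb Htc a. unfold a, yB, yB1.
  replace ((1 + beta) * tc - tc) with (beta * tc) by ring.
  assert (Hbt : 0 < beta * tc) by nra.
  assert (0 < Rpower (beta * tc) beta) by apply Rpower_pos.
  replace (- beta - 1) with (- beta + - (1)) by ring.
  rewrite Rpower_plus, !Rpower_Ropp, Rpower_1 by exact Hbt.
  split; field; lra.
Qed.

Lemma yB2_le_Rpower a beta tb B p s : 1 < p -> beta = 2 / (p - 1) -> 0 < a ->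
  beta * (beta + 1) <= B / 2 * Rpower a (p - 1) -> s < tb ->
  yB2 a beta tb s <= B / 2 * Rpower (yB a beta tb s) p.
Proof.
  intros Hp Hbeta Ha Hamp Hs. unfold yB2, yB.
  assert (HD : 0 < tb - s) by lra.
  rewrite <- Rpower_mult_distr, Rpower_mult by (auto; apply Rpower_pos).
  replace (- beta * p) with (- beta - 2) by (rewrite Hbeta; field; lra).
  replace (Rpower a p) with (Rpower a (p - 1) * a)
    by (replace p with ((p - 1) + 1) at 2 by ring; rewrite Rpower_plus, Rpower_1 by exact Ha; ring).
  assert (0 < a * Rpower (tb - s) (- beta - 2)) by (apply Rmult_lt_0_compat; [exact Ha | apply Rpower_pos]).
  assert (beta * (beta + 1) * (a * Rpower (tb - s) (- beta - 2))
          <= B / 2 * Rpower a (p - 1) * (a * Rpower (tb - s) (- beta - 2)))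
    by (apply Rmult_le_compat_r; lra).
  nra.
Qed.

Lemma yB_ge a beta tb M d : 0 < a -> 0 < beta -> 0 < M -> 0 < d ->
  d <= Rpower (a / M) (/ beta) -> M <= yB a beta tb (tb - d).
Proof.
  intros Ha Hb HM Hd Hdd. unfold yB. replace (tb - (tb - d)) with d by ring.
  assert (Hle : Rpower (Rpower (a / M) (/ beta)) (- beta) <= Rpower d (- beta))
    by (apply Rpower_Ropp_le; lra).
  rewrite Rpower_mult in Hle. replace (/ beta * - beta) with (- (1)) in Hle by (field; lra).
  rewrite Rpower_Ropp, Rpower_1 in Hle by (apply Rdiv_lt_0_compat; lra).
  replace M with (a * / (a / M)) by (field; lra).
  apply Rmult_le_compat_l; lra.
Qed.

Section Comparison.
Variables W Wr Wt Wrr Wtt : R -> R -> R.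
Hypothesis HWr : forall x sg, 0 < x -> is_derive (fun z => W z sg) x (Wr x sg).
Hypothesis HWt : forall x sg, 0 < x -> is_derive (fun z => W x z) sg (Wt x sg).
Hypothesis HWrr : forall x sg, 0 < x -> is_derive (fun z => Wr z sg) x (Wrr x sg).
Hypothesis HWtt : forall x sg, 0 < x -> is_derive (fun z => Wt x z) sg (Wtt x sg).
Hypothesis HC : forall x sg, 0 < x ->
  jcont Wr x sg /\ jcont Wt x sg /\ jcont Wrr x sg /\ jcont Wtt x sg.
Hypothesis HCW : forall x sg, 0 < x -> jcont W x sg.

Variables L eta delta B tc tb a beta p m0 : R.
Hypothesis HL : 0 < L.
Hypothesis Hsource : forall x s, L / 2 <= x <= 3 * L / 2 -> 0 <= s -> 0 <= W x s ->
  B / 2 * rpow (W x s) p - delta <= Wtt x s - Wrr x s.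
Hypothesis Hvelocity : forall x, L / 2 <= x <= 3 * L / 2 -> eta <= Wt x 0.
Hypothesis Hinitial : forall x, L / 2 <= x <= 3 * L / 2 -> m0 <= W x 0.
Hypothesis Hm0 : 0 < m0.
Hypothesis Htc : 0 < tc.
Hypothesis Htctb : tc < tb.
Hypothesis HtbL : tb <= L / 2.
Hypothesis Hdelta : 0 <= delta.
Hypothesis Hdtb : delta * tb <= eta.
Hypothesis Heta : 0 < eta.
Hypothesis HB : 0 < B.
Hypothesis Hbeta : 0 < beta.
Hypothesis Hp : 1 < p.
Hypothesis Ha : 0 < a.
Hypothesis HyBtc : yB a beta tb tc = eta * tc / 2.
Hypothesis HyB1tc : yB1 a beta tb tc <= eta / 2.
Hypothesis HyB2 : forall s, s < tb -> yB2 a beta tb s <= B / 2 * Rpower (yB a beta tb s) p.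

(** The subsolution: linear growth [eta s / 2] (half the initial velocity) up to [tc],
    then, glued at [tc], the explicit blow-up solution. *)
Definition profile s := if Rle_dec s tc then eta * s / 2 else yB a beta tb s.

Definition below_profile tau :=
  forall s x, 0 <= s < tau -> L / 2 + s <= x <= 3 * L / 2 - s -> profile s <= W x s.

Lemma profile_nonneg s : 0 <= s -> 0 <= profile s.
Proof.
  intro H. unfold profile. destruct (Rle_dec s tc).
  - apply Rmult_le_pos; [apply Rmult_le_pos |]; lra.
  - left. apply yB_pos, Ha.
Qed.

Lemma source_ge_profile t0 x0 sg x : below_profile t0 ->
  L / 2 + t0 <= x0 <= 3 * L / 2 - t0 -> 0 <= sg < t0 ->
  x0 - t0 + sg <= x <= x0 + t0 - sg ->
  B / 2 * rpow (profile sg) p - delta <= Wtt x sg - Wrr x sg.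
Proof.
  intros Hbelow Hx0 Hsg Hx.
  assert (Hprof : profile sg <= W x sg) by (apply Hbelow; lra).
  assert (Hpos := profile_nonneg sg (proj1 Hsg)).
  assert (rpow (profile sg) p <= rpow (W x sg) p) by (apply rpow_le; lra).
  assert (Hsrc := Hsource x sg ltac:(lra) (proj1 Hsg) ltac:(lra)).
  assert (B / 2 * rpow (profile sg) p <= B / 2 * rpow (W x sg) p)
    by (apply Rmult_le_compat_l; lra).
  lra.
Qed.

Lemma char_integral_base x0 t0 : 0 <= t0 -> L / 2 + t0 <= x0 <= 3 * L / 2 - t0 ->
  2 * t0 * eta + 2 * m0 <= char_integral W Wt x0 t0 0.
Proof.
  intros Ht0 Hx0. unfold char_integral.
  replace (x0 - t0 + 0) with (x0 - t0) by ring. replace (x0 + t0 - 0) with (x0 + t0) by ring.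
  assert (Hint : RInt (fun _ => eta) (x0 - t0) (x0 + t0) <= RInt (fun x => Wt x 0) (x0 - t0) (x0 + t0)).
  { apply RInt_le.
    - lra.
    - apply ex_RInt_const.
    - apply ex_RInt_slice; try lra. intros x Hx. apply HC, Hx.
    - intros x Hx. apply Hvelocity. lra. }
  rewrite RInt_const in Hint. unfold scal in Hint; simpl in Hint.
  unfold mult in Hint; simpl in Hint.
  assert (m0 <= W (x0 + t0) 0) by (apply Hinitial; lra).
  assert (m0 <= W (x0 - t0) 0) by (apply Hinitial; lra).
  lra.
Qed.

Lemma char_integral_linear_phase x0 t0 s2 : below_profile t0 ->
  L / 2 + t0 <= x0 <= 3 * L / 2 - t0 -> 0 <= s2 <= t0 ->
  char_integral W Wt x0 t0 s2 - char_integral W Wt x0 t0 0 >= - delta * (2 * t0 * s2 - s2 * s2).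
Proof.
  intros Hbelow Hx0 Hs2.
  replace (- delta * (2 * t0 * s2 - s2 * s2)) with
    ((fun s => - delta * (2 * t0 * s - s * s)) s2 - (fun s => - delta * (2 * t0 * s - s * s)) 0)
    by (simpl; ring).
  apply (char_integral_increment_ge W Wr Wt Wrr Wtt HWr HWt HWrr HWtt HC x0 t0 0 s2
           (fun _ => - delta) (fun s => - delta * (2 * t0 * s - s * s))
           (fun s => - delta * (2 * t0 - 2 * s))); try lra.
  - intros sg _. auto_derive; auto. ring.
  - intros sg _. lra.
  - intros sg x Hsg Hx.
    assert (Hsrc := source_ge_profile t0 x0 sg x Hbelow Hx0 ltac:(lra) Hx).
    assert (0 <= B / 2 * rpow (profile sg) p) by (apply Rmult_le_pos; [lra | apply rpow_ge0]).
    lra.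
Qed.

Definition blowup_phase_bound t0 s :=
  - delta * (2 * t0 * s - s * s) + 2 * ((t0 - s) * yB1 a beta tb s + yB a beta tb s).

Lemma char_integral_blowup_phase x0 t0 : below_profile t0 -> tc < t0 < tb ->
  L / 2 + t0 <= x0 <= 3 * L / 2 - t0 ->
  char_integral W Wt x0 t0 t0 - char_integral W Wt x0 t0 tc
    >= blowup_phase_bound t0 t0 - blowup_phase_bound t0 tc.
Proof.
  intros Hbelow Ht0 Hx0.
  apply (char_integral_increment_ge W Wr Wt Wrr Wtt HWr HWt HWrr HWtt HC x0 t0 tc t0
           (fun s => B / 2 * Rpower (yB a beta tb s) p - delta) (blowup_phase_bound t0)
           (fun s => - delta * (2 * t0 - 2 * s) + 2 * (t0 - s) * yB2 a beta tb s)); try lra.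
  - intros sg Hsg. unfold blowup_phase_bound. eapply is_derive_eq.
    + apply (is_derive_plus (fun s => - delta * (2 * t0 * s - s * s))
               (fun s => 2 * ((t0 - s) * yB1 a beta tb s + yB a beta tb s))).
      * auto_derive; auto.
      * apply is_derive_scal, (is_derive_plus (fun s => (t0 - s) * yB1 a beta tb s)).
        -- apply (Derive.is_derive_mult (fun s => t0 - s)).
           ++ auto_derive; auto.
           ++ apply is_derive_yB1. lra.
        -- apply is_derive_yB. lra.
    + unfold plus; simpl. ring.
  - intros sg Hsg.
    assert (H2 := HyB2 sg ltac:(lra)).
    assert (2 * (t0 - sg) * yB2 a beta tb sg
            <= 2 * (t0 - sg) * (B / 2 * Rpower (yB a beta tb sg) p))
      by (apply Rmult_le_compat_l; lra).
    nra.
  - intros sg x Hsg Hx.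
    assert (Hsrc := source_ge_profile t0 x0 sg x Hbelow Hx0 ltac:(lra) Hx).
    unfold profile in Hsrc. destruct (Rle_dec sg tc); [lra |].
    rewrite rpow_Rpower in Hsrc by apply yB_pos, Ha. exact Hsrc.
Qed.

Lemma profile_margin t0 x0 : 0 <= t0 < tb -> below_profile t0 ->
  L / 2 + t0 <= x0 <= 3 * L / 2 - t0 -> profile t0 + m0 <= W x0 t0.
Proof.
  intros Ht0 Hbelow Hx0.
  assert (Hbase := char_integral_base x0 t0 (proj1 Ht0) Hx0).
  assert (Hapex := char_integral_apex W Wt x0 t0).
  assert (delta * t0 * t0 <= eta * t0).
  { apply Rmult_le_compat_r; [lra |].
    apply Rle_trans with (delta * tb); [apply Rmult_le_compat_l |]; lra. }
  unfold profile. destruct (Rle_dec t0 tc).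
  - assert (H1 := char_integral_linear_phase x0 t0 t0 Hbelow Hx0 ltac:(lra)). lra.
  - assert (H1 := char_integral_linear_phase x0 t0 tc Hbelow Hx0 ltac:(lra)).
    assert (H2 := char_integral_blowup_phase x0 t0 Hbelow ltac:(lra) Hx0).
    unfold blowup_phase_bound in H2. rewrite HyBtc in H2.
    replace (t0 - t0) with 0 in H2 by ring.
    assert ((t0 - tc) * yB1 a beta tb tc <= (t0 - tc) * (eta / 2))
      by (apply Rmult_le_compat_l; lra).
    nra.
Qed.

Lemma continuous_profile_near tau eps : 0 <= tau < tb -> 0 < eps ->
  exists d, 0 < d /\ forall s, Rabs (s - tau) < d -> Rabs (profile s - profile tau) < eps.
Proof.
  intros Htau Heps.
  assert (Hnear : forall f : R -> R, continuous f tau ->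
            exists d, 0 < d /\ forall s, Rabs (s - tau) < d -> Rabs (f s - f tau) < eps).
  { intros f Hf. apply continuity_pt_filterlim in Hf.
    apply continuity_pt_locally with (eps := mkposreal eps Heps) in Hf.
    destruct Hf as [d Hd].
    exists d. split; [apply cond_pos | intros s Hs; apply (Hd s Hs)]. }
  destruct (Hnear (fun s => eta * s / 2)) as [d1 [Hd1 Hlin]].
  { apply (ex_derive_continuous (K := R_AbsRing) (V := R_NormedModule)). auto_derive; auto. }
  destruct (Hnear (yB a beta tb) (continuous_yB a beta tb tau (proj2 Htau))) as [d2 [Hd2 Hyb]].
  destruct (Rtotal_order tau tc) as [Hlt | [-> | Hgt]].
  - exists (Rmin d1 (tc - tau)). split; [apply Rmin_glb_lt; lra |].
    intros s Hs. pose proof (Rmin_l d1 (tc - tau)). pose proof (Rmin_r d1 (tc - tau)).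
    apply Rabs_def2 in Hs as Hs'. unfold profile.
    destruct (Rle_dec s tc), (Rle_dec tau tc); try lra. apply Hlin. lra.
  - exists (Rmin d1 d2). split; [apply Rmin_glb_lt; lra |].
    intros s Hs. pose proof (Rmin_l d1 d2). pose proof (Rmin_r d1 d2).
    unfold profile. destruct (Rle_dec tc tc); [| lra]. destruct (Rle_dec s tc).
    + apply Hlin. lra.
    + rewrite <- HyBtc. apply Hyb. lra.
  - exists (Rmin d2 (tau - tc)). split; [apply Rmin_glb_lt; lra |].
    intros s Hs. pose proof (Rmin_l d2 (tau - tc)). pose proof (Rmin_r d2 (tau - tc)).
    apply Rabs_def2 in Hs as Hs'. unfold profile.
    destruct (Rle_dec s tc), (Rle_dec tau tc); try lra. apply Hyb. lra.
Qed.

Lemma below_profile_extend ts : 0 <= ts < tb -> below_profile ts ->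
  exists d, 0 < d /\ ts + d <= tb /\ below_profile (ts + d).
Proof.
  intros Hts Hbelow.
  assert (Hmargin := profile_margin ts).
  destruct (uniform_continuity_2d_1d W (L / 2 + ts) (3 * L / 2 - ts) ts
              ltac:(intros x Hx; apply jcont_continuity_2d_pt, HCW; lra)
              (mkposreal (m0 / 2) ltac:(lra))) as [d1 Hd1].
  destruct (continuous_profile_near ts (m0 / 2) Hts ltac:(lra)) as [d2 [Hd2 Hprof]].
  pose proof (cond_pos d1) as Hd1pos.
  set (d := Rmin (Rmin d1 d2) (tb - ts) / 2).
  pose proof (Rmin_l (Rmin d1 d2) (tb - ts)). pose proof (Rmin_r (Rmin d1 d2) (tb - ts)).
  pose proof (Rmin_l d1 d2). pose proof (Rmin_r d1 d2).
  assert (Hd : 0 < d).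
  { unfold d. assert (0 < Rmin (Rmin d1 d2) (tb - ts)) by (repeat apply Rmin_glb_lt; lra). lra. }
  exists d. split; [exact Hd | split; [unfold d in *; lra |]].
  intros s x Hs Hx. destruct (Rlt_dec s ts) as [Hlt | Hge]; [apply Hbelow; lra |].
  assert (Hx' : L / 2 + ts <= x <= 3 * L / 2 - ts) by lra.
  assert (Hcont : Rabs (W x s - W x ts) < m0 / 2).
  { apply (Hd1 x ts x s Hx'); try (unfold d in *; simpl; lra).
    rewrite Rminus_eq_0, Rabs_R0. lra. }
  assert (Hclose : Rabs (profile s - profile ts) < m0 / 2).
  { apply Hprof. rewrite Rabs_right by lra. unfold d in *; lra. }
  assert (Hm := Hmargin x ltac:(lra) Hbelow Hx').
  apply Rabs_def2 in Hcont. apply Rabs_def2 in Hclose. lra.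
Qed.

(** Continuous induction: the supremum of the times up to which [W] stays above the profile
    can be neither below [tb] (by [below_profile_extend]) nor unattained. *)
Lemma below_profile_tb : below_profile tb.
Proof.
  set (E := fun tau => 0 <= tau <= tb /\ below_profile tau).
  assert (HE0 : E 0) by (split; [lra | intros s x Hs; lra]).
  assert (Hbound : bound E) by (exists tb; intros t [Ht _]; lra).
  destruct (completeness E Hbound (ex_intro _ 0 HE0)) as [ts [Hub Hlub]].
  assert (Hts0 : 0 <= ts) by (apply Hub, HE0).
  assert (Htstb : ts <= tb) by (apply Hlub; intros t [Ht _]; lra).
  assert (Hts : below_profile ts).
  { intros s x Hs Hx.
    destruct (classic (exists t, E t /\ s < t)) as [[t [[_ Ht] Hst]] | Hno]; [apply Ht; lra |].
    exfalso. assert (ts <= s); [| lra].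
    apply Hlub. intros t Ht. destruct (Rle_dec t s) as [| Hn]; [assumption |].
    exfalso. apply Hno. exists t. split; [exact Ht | lra]. }
  destruct (Rle_dec tb ts) as [Hge | Hlt]; [replace tb with ts by lra; exact Hts |].
  destruct (below_profile_extend ts ltac:(lra) Hts) as [d [Hd [Hdle Hext]]].
  assert (ts + d <= ts) by (apply Hub; split; [lra | exact Hext]).
  lra.
Qed.

Lemma blowup_contradiction : False.
Proof.
  assert (HWL := proj2 (continuity_pt_filterlim _ _) (jcont_slice_t W L tb (HCW L tb HL))).
  apply continuity_pt_locally with (eps := mkposreal 1 Rlt_0_1) in HWL.
  destruct HWL as [d1 Hd1]. pose proof (cond_pos d1).
  set (M := Rabs (W L tb) + 2).
  assert (HM : 0 < M) by (pose proof (Rabs_pos (W L tb)); unfold M; lra).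
  assert (Hd0 : 0 < Rpower (a / M) (/ beta)) by apply Rpower_pos.
  set (d := Rmin (Rmin (d1 / 2) ((tb - tc) / 2)) (Rpower (a / M) (/ beta))).
  pose proof (Rmin_l (Rmin (d1 / 2) ((tb - tc) / 2)) (Rpower (a / M) (/ beta))).
  pose proof (Rmin_r (Rmin (d1 / 2) ((tb - tc) / 2)) (Rpower (a / M) (/ beta))).
  pose proof (Rmin_l (d1 / 2) ((tb - tc) / 2)). pose proof (Rmin_r (d1 / 2) ((tb - tc) / 2)).
  assert (Hd : 0 < d) by (unfold d; repeat apply Rmin_glb_lt; lra).
  assert (Hprof : profile (tb - d) <= W L (tb - d))
    by (apply below_profile_tb; unfold d in *; lra).
  unfold profile in Hprof. destruct (Rle_dec (tb - d) tc); [unfold d in *; lra |].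
  assert (HyB := yB_ge a beta tb M d Ha Hbeta HM Hd ltac:(unfold d in *; lra)).
  assert (Hcont : Rabs (W L (tb - d) - W L tb) < 1).
  { apply (Hd1 (tb - d)). change (Rabs (tb - d - tb) < d1).
    replace (tb - d - tb) with (- d) by ring. rewrite Rabs_Ropp, Rabs_right by lra.
    unfold d in *; lra. }
  apply Rabs_def2 in Hcont. pose proof (RRle_abs (W L tb)).
  unfold M in HyB. lra.
Qed.

End Comparison.

Definition monomial K e L := K * Rpower L e.

Lemma monomial_mult K1 e1 K2 e2 L :
  monomial K1 e1 L * monomial K2 e2 L = monomial (K1 * K2) (e1 + e2) L.
Proof. unfold monomial. rewrite Rpower_plus. ring. Qed.

Lemma monomial_Rpower K e q L : 0 < K -> 0 < L ->
  Rpower (monomial K e L) q = monomial (Rpower K q) (e * q) L.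
Proof.
  intros HK HL. unfold monomial.
  rewrite <- Rpower_mult_distr by (auto; apply Rpower_pos). rewrite Rpower_mult. reflexivity.
Qed.

Lemma monomial_inv K e L : / monomial K e L = monomial (/ K) (- e) L.
Proof. unfold monomial. rewrite Rpower_Ropp, Rinv_mult. reflexivity. Qed.

Lemma monomial_le K1 e1 K2 e2 L : 0 < K2 -> K1 / K2 * Rpower L (e1 - e2) <= 1 ->
  monomial K1 e1 L <= monomial K2 e2 L.
Proof.
  intros HK H. unfold monomial.
  assert (HL2 : 0 < Rpower L e2) by apply Rpower_pos.
  replace (e1 - e2) with (e1 + - e2) in H by ring. rewrite Rpower_plus, Rpower_Ropp in H.
  replace (K1 * Rpower L e1) with (K1 / K2 * (Rpower L e1 * / Rpower L e2) * (K2 * Rpower L e2))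
    by (field; lra).
  rewrite <- (Rmult_1_l (K2 * Rpower L e2)) at 2.
  apply Rmult_le_compat_r; [apply Rmult_le_pos |]; lra.
Qed.

Lemma monomial_le_1_eventually K e : 0 < K -> e < 0 ->
  exists L0, 0 < L0 /\ forall L, L0 <= L -> K * Rpower L e <= 1.
Proof.
  intros HK He. exists (Rpower K (/ - e)). split; [apply Rpower_pos |].
  intros L HL.
  assert (H0 : 0 < Rpower K (/ - e)) by apply Rpower_pos.
  assert (H1 : Rpower (Rpower K (/ - e)) (- e) <= Rpower L (- e)) by (apply Rle_Rpower_l; lra).
  rewrite Rpower_mult in H1. replace (/ - e * - e) with 1 in H1 by (field; lra).
  rewrite Rpower_1, Rpower_Ropp in H1 by exact HK.
  assert (HLe : 0 < Rpower L e) by apply Rpower_pos.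
  apply Rmult_le_compat_r with (r := Rpower L e) in H1; [| lra].
  rewrite Rinv_l in H1 by lra. exact H1.
Qed.

(** All constants of the comparison argument on the slab [L/2 <= r <= 3L/2], as monomials in
    [L]: [etaL] bounds [w_t(., 0)] from below, [BL] is the coefficient of [w^p], [muL] bounds
    the potential [k(k-1)/r^2], [deltaL] is the Young remainder, [tcL ~ L^theta] ends the
    linear phase and [tbL = (1 + beta) tcL] is the blow-up time of the glued profile. The
    exponent [theta] lies strictly between [theta0], below which the amplitude [aL] is too
    small, and [1], above which [tbL] exceeds [L/2]. *)
Section Scaling.
Variables k A p kap Cg c : R.
Hypothesis HA : 0 < A.
Hypothesis Hp : 1 < p.
Hypothesis Hkap2 : kap < 2 / (p - 1).
Hypothesis HCg : 0 < Cg.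
Hypothesis Hc : 0 < c.

Definition beta := 2 / (p - 1).
Definition theta0 := (1 + kap) * (p - 1) / (p + 1).
Definition theta := (1 + theta0) / 2.
Definition Keta := Cg * Rpower (/ 2) k * / Rpower 2 (1 + kap).
Definition eeta := k - 1 - kap.
Definition KB := A * Rpower (3 / 2) (k * (1 - p)).
Definition eB := k * (1 - p).
Definition etaL L := monomial Keta eeta L.
Definition BL L := monomial KB eB L.
Definition muL L := 4 * c / (L * L).
Definition WL L := Rpower (2 * muL L / BL L) (/ (p - 1)).
Definition deltaL L := muL L * WL L.
Definition tcL L := Rpower L theta.
Definition tbL L := (1 + beta) * tcL L.
Definition aL L := etaL L * tcL L / 2 * Rpower (beta * tcL L) beta.

Lemma beta_pos : 0 < beta.
Proof. unfold beta. apply Rdiv_lt_0_compat; lra. Qed.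

Lemma theta0_lt_1 : theta0 < 1.
Proof.
  assert (Hkb : kap * (p - 1) < 2).
  { apply Rmult_lt_compat_r with (r := p - 1) in Hkap2; [| lra].
    replace (2 / (p - 1) * (p - 1)) with 2 in Hkap2 by (field; lra). exact Hkap2. }
  unfold theta0. apply (Rmult_lt_reg_r (p + 1)); [lra |].
  replace ((1 + kap) * (p - 1) / (p + 1) * (p + 1)) with ((1 + kap) * (p - 1)) by (field; lra).
  nra.
Qed.

Lemma theta_lt_1 : theta < 1.
Proof. unfold theta. pose proof theta0_lt_1. lra. Qed.

Lemma KB_pos : 0 < KB.
Proof. apply Rmult_lt_0_compat; [exact HA | apply Rpower_pos]. Qed.

Lemma Keta_pos : 0 < Keta.
Proof.
  unfold Keta. repeat apply Rmult_lt_0_compat; try apply Rpower_pos; try exact HCg.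
  apply Rinv_0_lt_compat, Rpower_pos.
Qed.

Lemma muL_monomial L : 0 < L -> muL L = monomial (4 * c) (-2) L.
Proof.
  intro HL. unfold muL, monomial. replace (-2) with (- INR 2) by (simpl; ring).
  rewrite Rpower_Ropp, Rpower_pow by exact HL. simpl. field. lra.
Qed.

Definition KW := Rpower (8 * c / KB) (/ (p - 1)).
Definition eW := (-2 - eB) * / (p - 1).

Lemma deltaL_monomial L : 0 < L -> deltaL L = monomial (4 * c * KW) (-2 + eW) L.
Proof.
  intro HL. unfold deltaL, WL, KW, eW, BL. rewrite muL_monomial by exact HL.
  unfold Rdiv. rewrite monomial_inv.
  replace (2 * monomial (4 * c) (-2) L * monomial (/ KB) (- eB) L) with
      (monomial (2 * (4 * c)) (-2) L * monomial (/ KB) (- eB) L) by (unfold monomial; ring).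
  pose proof KB_pos.
  rewrite monomial_mult, monomial_Rpower, monomial_mult by
    (try apply Rmult_lt_0_compat; try apply Rinv_0_lt_compat; lra).
  replace (2 * (4 * c)) with (8 * c) by ring. replace (-2 + - eB) with (-2 - eB) by ring.
  reflexivity.
Qed.

Lemma tbL_monomial L : tbL L = monomial (1 + beta) theta L.
Proof. reflexivity. Qed.

Definition Ka := Keta / 2 * Rpower beta beta.
Definition ea := eeta + theta + theta * beta.

Lemma aL_monomial L : 0 < L -> aL L = monomial Ka ea L.
Proof.
  intro HL. unfold aL, Ka, ea, tcL, etaL, monomial.
  rewrite <- Rpower_mult_distr, Rpower_mult by (auto; try apply beta_pos; apply Rpower_pos).
  rewrite !Rpower_plus. field.
Qed.

Lemma deltaL_tbL_exponent_neg : -2 + eW + theta - eeta < 0.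
Proof.
  unfold eW, eB, eeta, theta.
  replace (-2 + (-2 - k * (1 - p)) * / (p - 1) + (1 + theta0) / 2 - (k - 1 - kap))
    with ((theta0 - 1) / 2 + (kap - 2 / (p - 1))) by (field; lra).
  pose proof theta0_lt_1. lra.
Qed.

Lemma aL_exponent_neg : 0 - (eB + ea * (p - 1)) < 0.
Proof.
  unfold ea, eB, eeta, theta, beta.
  replace (0 - (k * (1 - p) + (k - 1 - kap + (1 + theta0) / 2
                               + (1 + theta0) / 2 * (2 / (p - 1))) * (p - 1)))
    with ((p + 1) * ((theta0 - 1) / 2)) by (unfold theta0; field; lra).
  pose proof theta0_lt_1.
  assert (0 < (p + 1) * ((1 - theta0) / 2)) by (apply Rmult_lt_0_compat; lra).
  lra.
Qed.

Lemma scaling_parameters_exist R0 : exists L, 2 <= L /\ 2 * R0 <= L /\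
  tbL L <= L / 2 /\ deltaL L * tbL L <= etaL L /\
  beta * (beta + 1) <= BL L / 2 * Rpower (aL L) (p - 1).
Proof.
  pose proof beta_pos. pose proof theta_lt_1. pose proof Keta_pos. pose proof KB_pos.
  assert (HKW : 0 < KW) by apply Rpower_pos.
  assert (HKa : 0 < Ka) by (apply Rmult_lt_0_compat; [lra | apply Rpower_pos]).
  destruct (monomial_le_1_eventually ((1 + beta) / / 2) (theta - 1)) as [L1 [HL1 HL1']].
  { apply Rdiv_lt_0_compat; lra. } { lra. }
  destruct (monomial_le_1_eventually (4 * c * KW * (1 + beta) / Keta) (-2 + eW + theta - eeta))
    as [L2 [HL2 HL2']].
  { apply Rdiv_lt_0_compat; [repeat apply Rmult_lt_0_compat |]; lra. }
  { apply deltaL_tbL_exponent_neg. }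
  destruct (monomial_le_1_eventually (beta * (beta + 1) / (KB / 2 * Rpower Ka (p - 1)))
              (0 - (eB + ea * (p - 1)))) as [L3 [HL3 HL3']].
  { apply Rdiv_lt_0_compat; [nra | apply Rmult_lt_0_compat; [lra | apply Rpower_pos]]. }
  { apply aL_exponent_neg. }
  set (L := Rmax (Rmax 2 (2 * R0)) (Rmax L1 (Rmax L2 L3))).
  pose proof (Rmax_l (Rmax 2 (2 * R0)) (Rmax L1 (Rmax L2 L3))).
  pose proof (Rmax_r (Rmax 2 (2 * R0)) (Rmax L1 (Rmax L2 L3))).
  pose proof (Rmax_l 2 (2 * R0)). pose proof (Rmax_r 2 (2 * R0)).
  pose proof (Rmax_l L1 (Rmax L2 L3)). pose proof (Rmax_r L1 (Rmax L2 L3)).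
  pose proof (Rmax_l L2 L3). pose proof (Rmax_r L2 L3).
  assert (HL : 0 < L) by (unfold L in *; lra).
  exists L. repeat split; try (unfold L in *; lra).
  - replace (L / 2) with (monomial (/ 2) 1 L) by (unfold monomial; rewrite Rpower_1; lra).
    apply monomial_le; [lra |]. apply HL1'. unfold L in *; lra.
  - rewrite deltaL_monomial, tbL_monomial, monomial_mult by exact HL.
    apply monomial_le; [lra |]. apply HL2'. unfold L in *; lra.
  - rewrite aL_monomial, monomial_Rpower by lra. unfold BL.
    replace (monomial KB eB L / 2 * monomial (Rpower Ka (p - 1)) (ea * (p - 1)) L) with
      (monomial (KB / 2) eB L * monomial (Rpower Ka (p - 1)) (ea * (p - 1)) L)
      by (unfold monomial; field).
    replace (beta * (beta + 1)) with (monomial (beta * (beta + 1)) 0 L)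
      by (unfold monomial; rewrite Rpower_O by exact HL; ring).
    rewrite monomial_mult. apply monomial_le.
    + apply Rmult_lt_0_compat; [lra | apply Rpower_pos].
    + apply HL3'. unfold L in *; lra.
Qed.

End Scaling.

Lemma BL_le_weight k A p L x : 0 <= k -> 0 < A -> 1 < p -> 0 < x <= 3 * L / 2 ->
  BL k A p L <= A * Rpower x (k * (1 - p)).
Proof.
  intros Hk HA Hp Hx. unfold BL, monomial, KB, eB.
  replace (k * (1 - p)) with (- (k * (p - 1))) by ring.
  rewrite Rmult_assoc, Rpower_mult_distr by lra.
  apply Rmult_le_compat_l; [lra |]. replace (3 / 2 * L) with (3 * L / 2) by field.
  apply Rpower_Ropp_le; [lra | nra].
Qed.

Lemma potential_le_muL c L x : 0 <= c -> 0 < L -> L / 2 <= x -> c / (x * x) <= muL c L.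
Proof.
  intros Hc HL Hx. unfold muL.
  replace (4 * c / (L * L)) with (c / ((L / 2) * (L / 2))) by (field; lra).
  unfold Rdiv. apply Rmult_le_compat_l; [exact Hc |].
  apply Rinv_le_contravar; [nra | apply Rmult_le_compat; lra].
Qed.

Lemma wk_source_ge (u ur urr utt : R -> R -> R) (F : R -> R) k A p L x s :
  1 < k -> 0 < A -> 1 < p -> 0 < L -> L / 2 <= x <= 3 * L / 2 ->
  (forall s, 0 <= s -> A * rpow s p <= F s) ->
  utt x s - 2 * k / x * ur x s - urr x s = F (u x s) ->
  0 <= wk u k x s ->
  BL k A p L / 2 * rpow (wk u k x s) p - deltaL k A p (k * (k - 1)) L
    <= wk_tt utt k x s - wk_rr u ur urr k x s.
Proof.
  intros Hk HA Hp HL Hx HF Heq Hw.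
  assert (Hx0 : 0 < x) by lra.
  assert (Hxk : 0 < Rpower x k) by apply Rpower_pos.
  assert (HBL : 0 < BL k A p L) by (apply Rmult_lt_0_compat; [apply KB_pos, HA | apply Rpower_pos]).
  assert (Hmu : 0 < muL (k * (k - 1)) L) by (unfold muL; apply Rdiv_lt_0_compat; nra).
  rewrite wk_wave_identity, Heq by exact Hx0.
  assert (Hsource : BL k A p L * rpow (wk u k x s) p <= Rpower x k * F (u x s)).
  { assert (HFu : A * rpow (u x s) p <= F (u x s)) by (apply HF; unfold wk in Hw; nra).
    apply Rle_trans with (Rpower x k * (A * rpow (u x s) p)); [| apply Rmult_le_compat_l; lra].
    replace (Rpower x k * (A * rpow (u x s) p)) with (A * (Rpower x k * rpow (u x s) p)) by ring.
    rewrite rpow_mult_Rpower by auto. rewrite <- Rmult_assoc.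
    apply Rmult_le_compat_r; [apply rpow_ge0 |]. apply BL_le_weight; lra. }
  assert (Hpot : k * (k - 1) * wk u k x s / (x * x) <= muL (k * (k - 1)) L * wk u k x s).
  { replace (k * (k - 1) * wk u k x s / (x * x)) with (k * (k - 1) / (x * x) * wk u k x s)
      by (field; lra).
    apply Rmult_le_compat_r; [exact Hw |]. apply potential_le_muL; nra. }
  assert (Hyoung := young_absorb _ _ p (wk u k x s) HBL Hmu Hp Hw).
  unfold deltaL, WL. lra.
Qed.

Lemma etaL_le_velocity k kap Cg L x gx : 0 <= k -> 0 < kap -> 0 < Cg -> 2 <= L ->
  L / 2 <= x <= 3 * L / 2 -> Cg / Rpower (1 + x) (1 + kap) <= gx ->
  etaL k kap Cg L <= Rpower x k * gx.
Proof.
  intros Hk Hkap HCg HL Hx Hg.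
  assert (Hxk : Rpower (L / 2) k <= Rpower x k) by (apply Rle_Rpower_l; lra).
  assert (Hg2 : Cg / Rpower (2 * L) (1 + kap) <= gx).
  { eapply Rle_trans; [| exact Hg]. unfold Rdiv. apply Rmult_le_compat_l; [lra |].
    apply Rinv_le_contravar; [apply Rpower_pos | apply Rle_Rpower_l; lra]. }
  assert (Heta : etaL k kap Cg L = Rpower (L / 2) k * (Cg / Rpower (2 * L) (1 + kap))).
  { unfold etaL, monomial, Keta, eeta. unfold Rdiv at 1.
    rewrite <- (Rpower_mult_distr L (/ 2)), <- (Rpower_mult_distr 2 L) by lra.
    replace (k - 1 - kap) with (k + - (1 + kap)) by ring.
    rewrite (Rpower_plus k (- (1 + kap)) L), (Rpower_Ropp L (1 + kap)).
    pose proof (Rpower_pos 2 (1 + kap)). pose proof (Rpower_pos L (1 + kap)).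
    field. lra. }
  rewrite Heta.
  assert (0 < Cg / Rpower (2 * L) (1 + kap)) by (apply Rdiv_lt_0_compat; [lra | apply Rpower_pos]).
  apply Rmult_le_compat; try lra. left. apply Rpower_pos.
Qed.

Definition decaying_data (f g : R -> R) (kappa R0 : R) : Prop :=
  exists Cg, 0 < Cg /\ forall r, R0 <= r ->
    0 < f r /\ Cg / Rpower (1 + r) (1 + kappa) <= g r.

Lemma radial_no_global_solution (u ur ut urr urt utt : R -> R -> R) (F f g : R -> R)
    (k A p kappa R0 : R) :
  1 < k -> 0 < A -> 1 < p -> 0 < kappa -> kappa < 2 / (p - 1) ->
  radial_C2 u ur ut urr urt utt ->
  (forall r t, 0 < r -> 0 <= t -> utt r t - 2 * k / r * ur r t - urr r t = F (u r t)) ->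
  (forall r, 0 < r -> u r 0 = f r /\ ut r 0 = g r) ->
  (forall s, 0 <= s -> A * rpow s p <= F s) ->
  decaying_data f g kappa R0 -> False.
Proof.
  intros Hk HA Hp Hkap Hkap2 Hsol Heq Hinit HF [Cg [HCg Hdata]].
  set (c := k * (k - 1)).
  assert (Hc : 0 < c) by (unfold c; nra).
  destruct (scaling_parameters_exist k A p kappa Cg c HA Hp Hkap2 HCg Hc R0)
    as [L [HL2 [HLR0 [Htb [Hdelta Hamp]]]]].
  pose proof (beta_pos p Hp) as Hb.
  assert (HtcL : 0 < tcL p kappa L) by apply Rpower_pos.
  assert (HetaL : 0 < etaL k kappa Cg L)
    by (apply Rmult_lt_0_compat; [apply Keta_pos, HCg | apply Rpower_pos]).
  assert (HaL : 0 < aL k p kappa Cg L).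
  { unfold aL. apply Rmult_lt_0_compat; [| apply Rpower_pos].
    apply Rdiv_lt_0_compat; [apply Rmult_lt_0_compat |]; lra. }
  destruct (continuity_ab_min (fun x => wk u k x 0) (L / 2) (3 * L / 2) ltac:(lra))
    as [xmin [Hmin Hxmin]].
  { intros x Hx. apply continuity_pt_filterlim, jcont_slice_r, (jcont_wk u ur ut urr urt utt k Hsol).
    lra. }
  assert (Hm0 : 0 < wk u k xmin 0).
  { unfold wk. destruct (Hinit xmin ltac:(lra)) as [-> _].
    apply Rmult_lt_0_compat; [apply Rpower_pos | apply Hdata; lra]. }
  destruct (yB_glue (etaL k kappa Cg L) (beta p) (tcL p kappa L) Hb HtcL) as [Hglue0 Hglue1].
  apply (blowup_contradiction (wk u k) (wk_r u ur k) (wk_t ut k) (wk_rr u ur urr k) (wk_tt utt k)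
     (is_derive_wk_r u ur ut urr urt utt k Hsol) (is_derive_wk_t u ur ut urr urt utt k Hsol)
     (is_derive_wk_rr u ur ut urr urt utt k Hsol) (is_derive_wk_tt u ur ut urr urt utt k Hsol)
     (jcont_wk_derivatives u ur ut urr urt utt k Hsol) (jcont_wk u ur ut urr urt utt k Hsol)
     L (etaL k kappa Cg L) (deltaL k A p c L) (BL k A p L) (tcL p kappa L) (tbL p kappa L)
     (aL k p kappa Cg L) (beta p) p (wk u k xmin 0)); try lra; try assumption.
  - intros x s Hx Hs Hw. apply (wk_source_ge u ur urr utt F); try assumption; try lra.
    apply Heq; lra.
  - intros x Hx. unfold wk_t. destruct (Hinit x ltac:(lra)) as [_ ->].
    apply etaL_le_velocity; try lra. apply Hdata. lra.
  - unfold tbL. nra.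
  - unfold deltaL, WL. assert (0 < muL c L) by (unfold muL; apply Rdiv_lt_0_compat; nra).
    pose proof (Rpower_pos (2 * muL c L / BL k A p L) (/ (p - 1))). nra.
  - apply Rmult_lt_0_compat; [apply KB_pos, HA | apply Rpower_pos].
  - right. exact Hglue1.
  - intros s Hs. apply yB2_le_Rpower; auto.
Qed.

Lemma decaying_data_of_f_decay c f g kappa R0 : 0 < c -> 0 < R0 ->
  (exists C1, 0 < C1 /\ forall r, R0 <= r ->
     f r >= C1 / Rpower (1 + r) kappa /\ g r > 0 /\ - c * f r / r + g r > 0) ->
  decaying_data f g kappa R0.
Proof.
  intros Hc HR0 [C1 [HC1 Hdata]]. exists (c * C1). split; [nra |].
  intros r Hr. destruct (Hdata r Hr) as [Hf [_ Hfg]].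
  assert (HP : 0 < Rpower (1 + r) kappa) by apply Rpower_pos.
  assert (Hf0 : 0 < C1 / Rpower (1 + r) kappa) by (apply Rdiv_lt_0_compat; lra).
  split; [lra |].
  rewrite Rpower_plus, Rpower_1 by lra.
  replace (c * C1 / ((1 + r) * Rpower (1 + r) kappa))
    with (c * (C1 / Rpower (1 + r) kappa) * / (1 + r)) by (field; lra).
  assert (Hinv : / (1 + r) <= / r) by (apply Rinv_le_contravar; lra).
  assert (c * (C1 / Rpower (1 + r) kappa) * / (1 + r) <= c * f r * / r).
  { apply Rmult_le_compat; try lra.
    - apply Rmult_le_pos; lra.
    - left. apply Rinv_0_lt_compat. lra.
    - apply Rmult_le_compat_l; lra. }
  replace (- c * f r / r) with (- (c * f r * / r)) in Hfg by (field; lra).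
  lra.
Qed.

Lemma decaying_data_of_g_margin c f g kappa R0 : 0 <= c -> 0 < R0 ->
  (exists C2, 0 < C2 /\ forall r, R0 <= r ->
     f r > 0 /\ g r > 0 /\ - c * f r / r + g r >= C2 / Rpower (1 + r) (1 + kappa)) ->
  decaying_data f g kappa R0.
Proof.
  intros Hc HR0 [C2 [HC2 Hdata]]. exists C2. split; [exact HC2 |].
  intros r Hr. destruct (Hdata r Hr) as [Hf [_ Hfg]]. split; [lra |].
  assert (0 <= c * f r / r) by (apply Rdiv_le_0_compat; nra).
  replace (- c * f r / r) with (- (c * f r / r)) in Hfg by (field; lra).
  lra.
Qed.

Lemma decaying_data_of_even_margin c f g kappa R0 : 0 <= c -> 0 < R0 ->
  (exists C3, 0 < C3 /\ forall r, R0 <= r ->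
     f r > 0 /\ g r > 0 /\
     - c * f r / r - Rabs (Derive f r) + g r / 2 >= C3 / Rpower (1 + r) (1 + kappa)) ->
  decaying_data f g kappa R0.
Proof.
  intros Hc HR0 [C3 [HC3 Hdata]]. exists (2 * C3). split; [lra |].
  intros r Hr. destruct (Hdata r Hr) as [Hf [_ Hfg]]. split; [lra |].
  assert (0 <= c * f r / r) by (apply Rdiv_le_0_compat; nra).
  pose proof (Rabs_pos (Derive f r)).
  pose proof (Rpower_pos (1 + r) (1 + kappa)).
  replace (- c * f r / r) with (- (c * f r / r)) in Hfg by (field; lra).
  replace (2 * C3 / Rpower (1 + r) (1 + kappa)) with (2 * (C3 / Rpower (1 + r) (1 + kappa)))
    by (field; lra).
  lra.
Qed.

Theorem theorem2p2 (n m : nat) (zeta p A kappa R0 : R) (F f g : R -> R) :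
  (2 <= m)%nat ->
  (n = 2 * m + 1)%nat \/ (n = 2 * m)%nat ->
  zeta_admissible m zeta ->
  1 < p ->
  C1_R F ->
  0 < A ->
  (forall s, 0 <= s -> A * rpow s p <= F s) ->
  0 < kappa -> kappa < 2 / (p - 1) ->
  C2_pos f -> C1_pos g ->
  0 < R0 ->
  ( ((n = 2 * m + 1)%nat /\
      ((exists C1, 0 < C1 /\ forall r, R0 <= r ->
          f r >= C1 / Rpower (1 + r) kappa /\ g r > 0 /\
          - C1m m * f r / r + g r > 0) \/
       (exists C2, 0 < C2 /\ forall r, R0 <= r ->
          f r > 0 /\ g r > 0 /\
          - C1m m * f r / r + g r >= C2 / Rpower (1 + r) (1 + kappa))))
    \/
    ((n = 2 * m)%nat /\
      (exists C3, 0 < C3 /\ forall r, R0 <= r ->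
          f r > 0 /\ g r > 0 /\
          - C2m m zeta * f r / r - Rabs (Derive f r) + g r / 2
            >= C3 / Rpower (1 + r) (1 + kappa))) ) ->
  ~ (exists u : R -> R -> R, global_solution n F f g u).
Proof.
  intros Hm Hn [[Hzeta _] _] Hp _ HA HF Hkap Hkap2 _ _ HR0 Hcase
    [u [ur [ut [urr [urt [utt [Hsol [Heq Hinit]]]]]]]].
  assert (HmR : 2 <= INR m) by (replace 2 with (INR 2) by reflexivity; apply le_INR, Hm).
  assert (HnR : 4 <= INR n).
  { replace 4 with (INR 4) by (simpl; ring). apply le_INR. lia. }
  assert (HC1m : 0 < C1m m) by (unfold C1m; nra).
  assert (HC2m : 0 <= C2m m zeta) by (unfold C2m; pose proof (pow2_ge_0 (INR m - 1)); nra).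
  assert (Hdata : decaying_data f g kappa R0).
  { destruct Hcase as [[_ [Hodd1 | Hodd2]] | [_ Heven]].
    - exact (decaying_data_of_f_decay _ f g kappa R0 HC1m HR0 Hodd1).
    - exact (decaying_data_of_g_margin _ f g kappa R0 (Rlt_le _ _ HC1m) HR0 Hodd2).
    - exact (decaying_data_of_even_margin _ f g kappa R0 HC2m HR0 Heven). }
  apply (radial_no_global_solution u ur ut urr urt utt F f g ((INR n - 1) / 2) A p kappa R0);
    try assumption; try lra.
  intros r t Hr Ht. rewrite <- (Heq r t Hr Ht). field. lra.
Qed.
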